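(* If $\Gamma$ is a Deza graph with parameters $(n,k,k-1,a)$, $k > 1$, and $\beta = 1$, then $\Gamma$ can be obtained either from Construction 1 or from Construction 2 (both described in the context below).
   Context: A Deza graph with parameters $(n,k,b,a)$ is a $k$-regular graph on $n$ vertices in which any two distinct vertices have either $a$ or $b$ ($a\le b$) common neighbours. For a vertex $v$, $\beta$ denotes the number of vertices $u$ with $|N(v)\cap N(u)|=b$; this number does not depend on $v$. Both constructions start from a strongly regular graph $\Delta$ with parameters $(m,\ell,\lambda,\mu)$ where $\lambda=\mu-1$, with adjacency matrix $B$. Construction 1: $\Gamma_1$ is the strong product of $K_2$ and $\Delta$, i.e. its adjacency matrix is $A_1 = B\otimes J_2 - I_{2m}$ ($J_2$ the $2\times 2$ all-ones matrix, $I_{2m}$ the identity matrix). It is a strictly Deza graph with parameters $(n,k,k-1,a)$ and $\beta=1$, where $n=2m$, $k=2\ell+1$, $a=2\mu$. Construction 2: assume $\Delta$ has an involutive automorphism that interchanges only non-adjacent vertices, with permutation matrix $P$. Let $P_1=P\otimes I_2$ and $A_2=P_1A_1$. Equivalently: take the strong product of $K_2$ with the graph of adjacency matrix $PB$ (dual Seidel switching of $\Delta$), and for every transposition $(x~y)$ of the involution, with corresponding vertex pairs $x',x''$ and $y',y''$, delete the edges $\{x',x''\}$, $\{y',y''\}$ and insert the edges $\{x',y''\}$, $\{x'',y'\}$. The resulting graph $\Gamma_2$ (adjacency matrix $A_2$, with $A_2^2=A_1^2$) is a strictly Deza graph with parameters $(n,k,k-1,a)$ and $\beta=1$, where $n=2m$,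 $k=2\ell+1$, $a=2\mu$. *)

From mathcomp Require Import all_boot all_order all_fingroup.
Set Implicit Arguments.
Unset Strict Implicit.
Unset Printing Implicit Defensive.

Section Graphs.
Variable T : finType.

Definition simple_graph (e : rel T) : Prop :=
  symmetric e /\ irreflexive e.

Definition nbhd (e : rel T) (v : T) : {set T} := [set w | e v w].
Definition common (e : rel T) (u v : T) : nat := #|nbhd e u :&: nbhd e v|.

Definition deza_graph (e : rel T) (n k b a : nat) : Prop :=
  [/\ simple_graph e, #|T| = n, a <= b,
      forall v, #|nbhd e v| = k &
      forall u v, u != v -> common e u v = a \/ common e u v = b].

Definition deza_beta (e : rel T) (b beta : nat) : Prop :=
  forall v, #|[set u | (u != v) && (common e v u == b)]| = beta.

Definition srg (e : rel T) (m l lam mu : nat) : Prop :=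
  [/\ simple_graph e, #|T| = m,
      forall v, #|nbhd e v| = l,
      forall u v, u != v -> e u v -> common e u v = lam &
      forall u v, u != v -> ~~ e u v -> common e u v = mu].

Definition nonadj_involution (e : rel T) (s : {perm T}) : Prop :=
  [/\ forall x y, e (s x) (s y) = e x y,
      forall x, s (s x) = x &
      forall x, s x != x -> ~~ e x (s x)].

(* Construction 1: strong product K_2 [x] Delta, adjacency (B+I)(x)J_2 - I.
   Vertex (x,i) with x in Delta and i in bool (the two vertices of K_2). *)
Definition constr1 (e : rel T) : rel (T * bool) :=
  fun p q => ((p.1 == q.1) || e p.1 q.1) && (p != q).

(* Construction 2: adjacency A_2 = P_1 A_1 with P_1 = P (x) I_2, where P is
   the permutation matrix of s: A_2[(x,i),(y,j)] = A_1[(s x,i),(y,j)]. *)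
Definition constr2 (e : rel T) (s : {perm T}) : rel (T * bool) :=
  fun p q => constr1 e (s p.1, p.2) q.

End Graphs.

Definition isomorphic (T U : finType) (e : rel T) (f : rel U) : Prop :=
  exists g : T -> U, bijective g /\ forall u v, f (g u) (g v) = e u v.

(* Every vertex v has a unique twin v' sharing k - 1 neighbours with it, so
   A^2 = aJ + (k - a)I + (k - 1 - a)P with P the permutation matrix of the twin map.
   As A commutes with A^2, J and I, it commutes with P: twinning is an automorphism.
   Hence N(v') and N(v) differ by exactly one vertex each way; the vertex adjacent to
   v' but not to v is the mate of v, and mating is an involution M commuting with P.
   The relation with adjacency matrix MA is symmetric (a parity count of the a common
   neighbours of two mates) and has every twin pair as a pair of closed twins, so it
   is the strong product of K_2 with its quotient Delta by the twin pairs.  Counting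
   common neighbours in that product shows that Delta is strongly regular with
   l = (k - 1)/2, mu = a/2 and lambda = mu - 1; M induces on Delta an involution
   exchanging only non-adjacent vertices, and A = M(MA) is Construction 2. *)

From mathcomp Require Import all_boot all_order all_fingroup.
From mathcomp Require Import zify.

Set Implicit Arguments.
Unset Strict Implicit.
Unset Printing Implicit Defensive.

Section Counting.
Variable T : finType.

Lemma card_set_sum (P : pred T) : #|[set x | P x]| = \sum_x P x.
Proof. by rewrite -sum1dep_card big_mkcond. Qed.

Lemma common_sum (e : rel T) u w : common e u w = \sum_x e u x * e w x.
Proof.
rewrite /common; have -> : nbhd e u :&: nbhd e w = [set x | e u x && e w x].
  by apply/setP => x; rewrite !inE.
by rewrite card_set_sum; apply: eq_bigr => x _; rewrite mulnb.
Qed.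

Lemma sum_adj_common (e : rel T) : symmetric e ->
  forall v w, \sum_u e v u * common e u w = \sum_u e w u * common e u v.
Proof.
move=> e_sym v w.
under eq_bigr => u _ do rewrite common_sum big_distrr.
under [RHS]eq_bigr => u _ do rewrite common_sum big_distrr.
rewrite [RHS]exchange_big /=; apply: eq_bigr => u _; apply: eq_bigr => x _.
by rewrite (e_sym x u); nia.
Qed.

Lemma card1_pick (A : {set T}) x0 : #|A| = 1 -> A = [set odflt x0 [pick x in A]].
Proof.
move/eqP/cards1P => [x ->].
by case: pickP => [y /set1P -> //|/(_ x)]; rewrite set11.
Qed.

End Counting.

Section DezaBeta1.
Variables (T : finType) (e : rel T) (n k a : nat).
Hypotheses (deza : deza_graph e n k k.-1 a) (k_gt1 : 1 < k)
  (beta1 : deza_beta e k.-1 1).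

Local Notation c := (common e).
Local Notation N := (nbhd e).

Lemma adj_sym : symmetric e. Proof. by case: deza => [[]]. Qed.
Lemma adj_irr : irreflexive e. Proof. by case: deza => [[]]. Qed.
Lemma card_nbhd v : #|N v| = k. Proof. by case: deza. Qed.
Lemma a_le_predk : a <= k.-1. Proof. by case: deza. Qed.

Lemma common_dichotomy u v : u != v -> c u v = a \/ c u v = k.-1.
Proof. by case: deza => _ _ _ _; apply. Qed.

Lemma commonC u v : c u v = c v u. Proof. by rewrite /common setIC. Qed.
Lemma common_id v : c v v = k. Proof. by rewrite /common setIid card_nbhd. Qed.

Definition twins v := [set u | (u != v) && (c v u == k.-1)].
Definition twin v := odflt v [pick u in twins v].

Lemma twinsE v : twins v = [set twin v].
Proof. exact/card1_pick/beta1. Qed.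

Lemma mem_twins v u : (u \in twins v) = (u == twin v).
Proof. by rewrite twinsE inE. Qed.

Lemma twin_neq v : twin v != v.
Proof. by have := eqxx (twin v); rewrite -mem_twins inE => /andP[]. Qed.

Lemma common_twin v : c v (twin v) = k.-1.
Proof. by have := eqxx (twin v); rewrite -mem_twins inE => /andP[_ /eqP]. Qed.

Lemma twinK : involutive twin.
Proof.
move=> v; apply/esym/eqP.
by rewrite -mem_twins inE eq_sym twin_neq commonC common_twin /=.
Qed.

Lemma twin_inj : injective twin. Proof. exact: inv_inj twinK. Qed.

Lemma common_other v u : u != v -> u != twin v -> c v u = a.
Proof.
move=> uv utv.
have [//|ck] : c v u = a \/ c v u = k.-1 by apply: common_dichotomy; rewrite eq_sym.
by move: utv; rewrite -mem_twins inE uv ck eqxx.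
Qed.

(* The vertex [v] cannot be dropped: on an empty vertex set [a] is arbitrary. *)
Lemma a_lt_predk (v : T) : a < k.-1.
Proof.
rewrite ltn_neqAle a_le_predk andbT; apply/eqP => ak.
suff : N v \subset twins v by move/subset_leq_card; rewrite card_nbhd twinsE cards1; lia.
apply/subsetP => u; rewrite !inE => vu.
have uv : u != v by apply: contraTneq vu => ->; rewrite adj_irr.
have : c v u = a \/ c v u = k.-1 by apply: common_dichotomy; rewrite eq_sym.
by rewrite uv -ak => -[] ->; rewrite eqxx.
Qed.

Lemma commonE u w : c u w = a + (k - a) * (u == w) + (k.-1 - a) * (u == twin w).
Proof.
have := a_le_predk.
have [->|uw] := eqVneq u w; first by rewrite common_id eq_sym (negbTE (twin_neq w)); lia.
have [->|utw] := eqVneq u (twin w); first by rewrite commonC common_twin; lia.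
by rewrite commonC common_other // !muln0 !addn0.
Qed.

Lemma sum_adj_commonE v w :
  \sum_u e v u * c u w = k * a + (k - a) * e v w + (k.-1 - a) * e v (twin w).
Proof.
have sum_eq z : \sum_u e v u * (u == z) = e v z.
  rewrite (bigD1 z) //= eqxx muln1 big1 ?addn0 // => u /negbTE ->.
  by rewrite muln0.
under eq_bigr => u _ do rewrite commonE !mulnDr mulnCA [e v u * (_ * _)]mulnCA.
rewrite !big_split /= -!big_distrr /= !sum_eq -big_distrl /=.
by rewrite -card_set_sum card_nbhd mulnC.
Qed.

Lemma adj_twin v w : e v (twin w) = e (twin v) w.
Proof.
have := sum_adj_common adj_sym v w; rewrite !sum_adj_commonE (adj_sym w v).
rewrite (adj_sym w (twin v)); have := a_lt_predk v.
by case: (e v (twin w)); case: (e (twin v) w) => /=; lia.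
Qed.

Lemma adj_twin_twin u w : e (twin u) (twin w) = e u w.
Proof. by rewrite -adj_twin twinK. Qed.

Definition mates u := N (twin u) :\: N u.
Definition mate u := odflt u [pick q in mates u].

Lemma matesE u : mates u = [set mate u].
Proof.
apply: card1_pick; rewrite cardsD card_nbhd setIC -/(c u (twin u)) common_twin.
by have := a_lt_predk u; lia.
Qed.

Lemma mem_mates u q : (q \in mates u) = ~~ e u q && e (twin u) q.
Proof. by rewrite /mates !inE. Qed.

Lemma mate_in_mates u : mate u \in mates u.
Proof. by rewrite matesE set11. Qed.

Lemma mate_adj_twin u : e (mate u) (twin u).
Proof. by have := mate_in_mates u; rewrite mem_mates => /andP[_]; rewrite adj_sym. Qed.

Lemma mate_nadj u : e (mate u) u = false.
Proof.
by have := mate_in_mates u; rewrite mem_mates => /andP[/negbTE]; rewrite adj_sym.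
Qed.

Lemma mate_twin u : mate (twin u) = twin (mate u).
Proof.
apply/esym/set1P; rewrite -matesE mem_mates twinK adj_twin_twin adj_twin.
by rewrite -mem_mates mate_in_mates.
Qed.

Lemma mate_neq_twin u : mate u != twin u.
Proof. by apply: contraTneq (mate_adj_twin u) => ->; rewrite adj_irr. Qed.

Lemma mateK : involutive mate.
Proof.
move=> u; apply/esym/set1P; rewrite -matesE mem_mates -adj_twin.
by rewrite mate_nadj mate_adj_twin.
Qed.

Lemma mate_inj : injective mate. Proof. exact: inv_inj mateK. Qed.

Lemma adj_twin_agree u q : q != mate u -> q != twin (mate u) -> e (twin u) q = e u q.
Proof.
move=> qm qtm; move: qm qtm; rewrite -mate_twin -!in_set1 -!matesE !mem_mates twinK.
by case: (e u q); case: (e (twin u) q).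
Qed.

(* The adjacency [P_1 A] of the paper, [P_1] being the permutation [mate]: it will be
   the strong product of Construction 1. *)
Definition adj1 x q := e (mate x) q.

Lemma adj1_irr x : adj1 x x = false. Proof. exact: mate_nadj. Qed.
Lemma adj1_twin x : adj1 x (twin x). Proof. exact: mate_adj_twin. Qed.

Lemma adj1_twinr x q : q != x -> q != twin x -> adj1 x (twin q) = adj1 x q.
Proof. by move=> qx qtx; rewrite /adj1 adj_twin adj_twin_agree // mateK. Qed.

Lemma adj1_twinl x q : adj1 (twin x) q = adj1 x (twin q).
Proof. by rewrite /adj1 mate_twin adj_twin. Qed.

Lemma twin_mate_neq v : twin (mate v) != v.
Proof. by rewrite -(inj_eq twin_inj) twinK mate_neq_twin. Qed.

(* In each orbit [{v, mate v, twin v, twin (mate v)}] of the commuting involutions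
   [mate] and [twin], select the [mate]-orbit of the vertex of least rank: this is a
   [mate]-stable transversal of the [twin]-pairs. *)
Definition chosen v :=
  minn (enum_rank v) (enum_rank (mate v)) <
  minn (enum_rank (twin v)) (enum_rank (twin (mate v))).

Definition reps := [set v | chosen v].

Lemma chosen_mate v : chosen (mate v) = chosen v.
Proof. by rewrite /chosen mateK minnC [minn (enum_rank (twin v)) _]minnC. Qed.

Lemma chosen_twin v : chosen (twin v) = ~~ chosen v.
Proof.
have rank_neq (x y : T) : x != y -> (enum_rank x : nat) != enum_rank y.
  by move=> xy; apply: contra xy => /eqP/ord_inj/enum_rank_inj ->.
have := rank_neq _ _ (twin_neq v); have := rank_neq _ _ (twin_mate_neq v).
have := rank_neq _ _ (mate_neq_twin v); have := rank_neq _ _ (twin_neq (mate v)).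
rewrite /chosen twinK mate_twin twinK -leqNgt ltn_neqAle => *.
by apply: andb_idl => _; lia.
Qed.

Lemma card_twin_closed (S : {set T}) :
  {in S, forall q, twin q \in S} -> #|S| = (#|S :&: reps|).*2.
Proof.
move=> S_twin; rewrite -(cardsID reps S) -addnn.
suff -> : S :\: reps = twin @: (S :&: reps) by rewrite card_imset //; exact: twin_inj.
apply/setP => q; rewrite !inE; apply/andP/imsetP => [[nq Sq] | [p]].
  by exists (twin q); rewrite ?twinK // !inE S_twin // chosen_twin nq.
by rewrite !inE => /andP[Sp p_rep] ->; rewrite chosen_twin p_rep S_twin.
Qed.

Definition shared x y := [set q | [&& adj1 x q, adj1 y q, q != twin x & q != twin y]].

Lemma shared_twin_closed x y : {in shared x y, forall q, twin q \in shared x y}.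
Proof.
move=> q; rewrite !inE => /and4P[xq yq qtx qty].
have qx : q != x by apply: contraTneq xq => ->; rewrite adj1_irr.
have qy : q != y by apply: contraTneq yq => ->; rewrite adj1_irr.
by rewrite !adj1_twinr // xq yq !(inj_eq twin_inj) qx qy.
Qed.

Lemma common_mates x y :
  y != x -> y != twin x -> a = #|shared x y| + adj1 x y + adj1 y x.
Proof.
move=> yx ytx.
have xy : x != y by rewrite eq_sym.
have xty : x != twin y by apply: contra_neq ytx => ->; rewrite twinK.
have <- : c (mate x) (mate y) = a.
  by apply: common_other; rewrite -?mate_twin (inj_eq mate_inj).
rewrite /common (cardsD1 (twin x)) (cardsD1 (twin y)) !inE.
rewrite -[e (mate x)]/(adj1 x) -[e (mate y)]/(adj1 y).
rewrite adj1_twin (adj1_twinr xy xty) (adj1_twinr yx ytx) adj1_twin.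
have -> : N (mate x) :&: N (mate y) :\ twin x :\ twin y = shared x y.
  apply/setP => q; rewrite !inE /adj1.
  by case: (q != twin x); case: (q != twin y); case: (e _ q); case: (e _ q).
rewrite (inj_eq twin_inj) yx andbT /=; lia.
Qed.

Lemma card_shared x y : #|shared x y| = (#|shared x y :&: reps|).*2.
Proof. exact/card_twin_closed/shared_twin_closed. Qed.

(* By [common_mates], [adj1 x y + adj1 y x] has the parity of [a]; a vertex moved by
   [mate] shows that [a] is even, and if [mate] moves nothing then [adj1] is [e]. *)
Lemma adj1_sym : symmetric adj1.
Proof.
move=> x y; have [->//|yx] := eqVneq y x.
have [->|ytx] := eqVneq y (twin x); first by rewrite adj1_twinl.
have [/existsP[v mv]|] := boolP [exists v, mate v != v]; last first.
  rewrite negb_exists => /forallP mate_fix.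
  by rewrite /adj1 !(eqP (negPn (mate_fix _))) adj_sym.
have := common_mates mv (mate_neq_twin v); rewrite /adj1 mateK !adj_irr card_shared.
have := common_mates yx ytx; rewrite card_shared /adj1.
by case: (e (mate x) y); case: (e (mate y) x) => /=; lia.
Qed.

Definition rep v := if chosen v then v else twin v.

Lemma rep_in_reps v : rep v \in reps.
Proof. by rewrite /rep inE; case: ifP => // /negbT; rewrite chosen_twin. Qed.

Local Notation m := #|reps|.

Definition vtx (i : 'I_m) : T := enum_val i.
Definition proj v : 'I_m := enum_rank_in (rep_in_reps v) (rep v).

Lemma vtx_chosen i : chosen (vtx i).
Proof. by have := enum_valP i; rewrite inE. Qed.

Lemma vtx_inj : injective vtx. Proof. exact: enum_val_inj. Qed.

Lemma projK v : vtx (proj v) = rep v.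
Proof. exact/enum_rankK_in/rep_in_reps. Qed.

Lemma rep_chosen v : chosen v -> rep v = v.
Proof. by rewrite /rep => ->. Qed.

Lemma vtxK i : proj (vtx i) = i.
Proof. by apply: vtx_inj; rewrite projK rep_chosen ?vtx_chosen. Qed.

Lemma rep_eq u w : (rep u == rep w) = (w == u) || (w == twin u).
Proof.
rewrite /rep; have [cwu|cwu] := eqVneq (chosen w) (chosen u).
  have -> : (w == twin u) = false.
    by apply/eqP => wtu; move: cwu; rewrite wtu chosen_twin; case: (chosen u).
  by rewrite orbF cwu; case: (chosen u); rewrite ?(inj_eq twin_inj) eq_sym.
have -> : (w == u) = false by apply/eqP => wu; move: cwu; rewrite wu eqxx.
move: cwu; case: (chosen u); case: (chosen w) => //= _;
  by rewrite eq_sym ?(can2_eq twinK twinK).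
Qed.

Lemma proj_eq u w : (proj u == proj w) = (w == u) || (w == twin u).
Proof. by rewrite -(inj_eq vtx_inj) !projK rep_eq. Qed.

Lemma rep_mate v : rep (mate v) = mate (rep v).
Proof. by rewrite /rep chosen_mate; case: (chosen v); rewrite ?mate_twin. Qed.

Lemma proj_twin v : proj (twin v) = proj v.
Proof. by apply/eqP; rewrite proj_eq twinK eqxx orbT. Qed.

Lemma adj1_rep u w : w != u -> w != twin u -> adj1 (rep u) (rep w) = adj1 u w.
Proof.
move=> wu wtu; rewrite /rep.
by case: (chosen u); case: (chosen w); rewrite ?adj1_twinl ?twinK ?adj1_twinr.
Qed.

Lemma chosen_twin_neq x q : chosen x -> chosen q -> q != twin x.
Proof. by move=> cx cq; apply: contraTneq cq => ->; rewrite chosen_twin cx. Qed.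

Lemma card_vtx_preim (S : {set T}) :
  {in S, forall q, twin q \in S} -> #|S| = (#|[set j | vtx j \in S]|).*2.
Proof.
move=> S_twin; rewrite (card_twin_closed S_twin); congr double.
rewrite -(card_imset _ vtx_inj); apply: eq_card => q; rewrite !inE.
apply/andP/imsetP => [[Sq cq] | [j]]; last by rewrite inE => Sj ->; rewrite vtx_chosen.
by exists (proj q); rewrite ?inE projK rep_chosen.
Qed.

Definition delta : rel 'I_m := fun i j => (i != j) && adj1 (vtx i) (vtx j).

Lemma delta_sym : symmetric delta.
Proof. by move=> i j; rewrite /delta eq_sym adj1_sym. Qed.

Lemma card_nbhd_delta i : k.-1 = (#|nbhd delta i|).*2.
Proof.
set x := vtx i; set S := N (mate x) :\ twin x.
have -> : nbhd delta i = [set j | vtx j \in S].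
  apply/setP => j; rewrite !inE /delta /adj1 -(inj_eq vtx_inj) -/x.
  rewrite chosen_twin_neq ?vtx_chosen //=.
  by case: (eqVneq x (vtx j)) => [<-|]; rewrite ?mate_nadj.
rewrite -card_vtx_preim.
  by have := cardsD1 (twin x) (N (mate x)); rewrite card_nbhd inE mate_adj_twin => ->.
move=> q; rewrite !inE => /andP[qtx xq].
have qx : q != x by apply: contraTneq xq => ->; rewrite mate_nadj.
by rewrite (inj_eq twin_inj) qx -[e (mate x)]/(adj1 x) adj1_twinr.
Qed.

Lemma common_delta i j : i != j -> a = (common delta i j).*2 + 2 * delta i j.
Proof.
move=> ij; set x := vtx i; set y := vtx j.
have yx : y != x by rewrite (inj_eq vtx_inj) eq_sym.
rewrite /common; have -> : nbhd delta i :&: nbhd delta j = [set l | vtx l \in shared x y].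
  apply/setP => l; rewrite !inE /delta -!(inj_eq vtx_inj) -/x -/y.
  rewrite !chosen_twin_neq ?vtx_chosen //= !andbT.
  case: (eqVneq x (vtx l)) => [<-|_]; first by rewrite adj1_irr.
  by case: (eqVneq y (vtx l)) => [<-|_]; rewrite ?adj1_irr ?andbF.
rewrite -card_vtx_preim; last exact: shared_twin_closed.
rewrite (common_mates yx (chosen_twin_neq (vtx_chosen i) (vtx_chosen j))).
by rewrite /delta ij (adj1_sym y x) -/x -/y /=; lia.
Qed.

Lemma a_gt1 (i : 'I_m) : 1 < a.
Proof.
have : 0 < #|nbhd delta i| by have := card_nbhd_delta i; lia.
case/card_gt0P => j; rewrite inE => dij.
have ij : i != j by move: dij => /andP[].
by have := common_delta ij; rewrite dij; lia.
Qed.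

(* [mu] is [(a./2).-1.+1] rather than [a./2] so that [lam.+1 = mu] also holds when
   there are no vertices. *)
Lemma delta_srg : srg delta m (k.-1)./2 (a./2).-1 (a./2).-1.+1.
Proof.
split.
- by split; [exact: delta_sym | move=> i; rewrite /delta eqxx].
- exact: card_ord.
- by move=> i; rewrite (card_nbhd_delta i) doubleK.
- by move=> i j ij dij; have := common_delta ij; rewrite dij; lia.
- move=> i j ij /negbTE dij; have := a_gt1 i.
  by have := common_delta ij; rewrite dij; lia.
Qed.

Definition mate_ord i := proj (mate (vtx i)).

Lemma vtx_mate_ord i : vtx (mate_ord i) = mate (vtx i).
Proof. by rewrite projK rep_chosen // chosen_mate vtx_chosen. Qed.

Lemma mate_ord_inj : injective mate_ord.
Proof. by move=> i j /(congr1 vtx); rewrite !vtx_mate_ord => /mate_inj/vtx_inj. Qed.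

Definition mate_perm := perm mate_ord_inj.

Lemma vtx_mate_perm i : vtx (mate_perm i) = mate (vtx i).
Proof. by rewrite permE vtx_mate_ord. Qed.

Lemma delta_mate_perm : nonadj_involution delta mate_perm.
Proof.
split.
- move=> i j; rewrite /delta (inj_eq perm_inj) !vtx_mate_perm /adj1 mateK.
  by rewrite adj_sym -[e (mate _)]/(adj1 _) adj1_sym.
- by move=> i; apply: vtx_inj; rewrite !vtx_mate_perm mateK.
- by move=> i _; rewrite /delta vtx_mate_perm /adj1 adj_irr andbF.
Qed.

Definition to_constr v := (proj v, ~~ chosen v).

Lemma to_constr_bij : bijective to_constr.
Proof.
exists (fun p => if p.2 then twin (vtx p.1) else vtx p.1).
  by move=> v; rewrite /= projK /rep; case: (chosen v); rewrite ?twinK.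
case=> i b; rewrite /to_constr; case: b => /=.
  by rewrite proj_twin vtxK chosen_twin vtx_chosen.
by rewrite vtxK vtx_chosen.
Qed.

Lemma constr1_to_constr u w : constr1 delta (to_constr u) (to_constr w) = adj1 u w.
Proof.
rewrite /constr1 (inj_eq (bij_inj to_constr_bij)) /= /delta !projK proj_eq.
have [->|wu] := eqVneq w u; first by rewrite andbF adj1_irr.
have [->|wtu] := eqVneq w (twin u); first by rewrite adj1_twin.
by rewrite /= adj1_rep // andbT.
Qed.

Lemma constr2_to_constr v w : constr2 delta mate_perm (to_constr v) (to_constr w) = e v w.
Proof.
rewrite /constr2 /=.
have -> : mate_perm (proj v) = proj (mate v).
  by apply: vtx_inj; rewrite vtx_mate_perm !projK rep_mate.
by rewrite -chosen_mate -[(proj _, _)]/(to_constr (mate v)) constr1_to_constr /adj1 mateK.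
Qed.

End DezaBeta1.

(* Construction 1 is Construction 2 with the identity involution, so the second
   alternative is the one established. *)
Theorem theorem2 (T : finType) (e : rel T) (n k a : nat) :
  deza_graph e n k k.-1 a -> 1 < k -> deza_beta e k.-1 1 ->
  (exists (m : nat) (eD : rel 'I_m) (l lam mu : nat),
      [/\ srg eD m l lam mu, lam.+1 = mu & isomorphic e (constr1 eD)])
  \/
  (exists (m : nat) (eD : rel 'I_m) (l lam mu : nat) (s : {perm 'I_m}),
      [/\ srg eD m l lam mu, lam.+1 = mu, nonadj_involution eD s
        & isomorphic e (constr2 eD s)]).
Proof.
move=> deza k_gt1 beta1; right.
exists #|reps e k|, (@delta T e k), (k.-1)./2, (a./2).-1, (a./2).-1.+1.
exists (mate_perm deza k_gt1 beta1).
split=> //; first exact: delta_srg deza k_gt1 beta1.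
  exact: delta_mate_perm.
exists (to_constr deza k_gt1 beta1); split; first exact: to_constr_bij.
exact: constr2_to_constr.
Qed.
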